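(* Let $\mathbf T$ be a countably infinite homogeneous tournament and $\mathbf T^*$ an expansion of $\mathbf T$ as in the context such that $\mathrm{Age}(\mathbf T^* )$ has the Ramsey property. Then $\mathrm{Age}(\mathbf T[I_\omega]^* )$ has the Ramsey property.
   Context: For relational structures $\mathbf A,\mathbf B$ in the same language, $\binom{\mathbf B}{\mathbf A}$ denotes the set of substructures of $\mathbf B$ isomorphic to $\mathbf A$. For $k\ge 1$, $\mathbf C\to(\mathbf B)^{\mathbf A}_k$ means: for every map $c:\binom{\mathbf C}{\mathbf A}\to[k]=\{0,\dots,k-1\}$ there is $\mathbf B'\in\binom{\mathbf C}{\mathbf B}$ such that $c$ is constant on $\binom{\mathbf B'}{\mathbf A}$. A class $\mathcal K$ of finite structures has the Ramsey property if for all $k\ge1$ and all $\mathbf A,\mathbf B\in\mathcal K$ there is $\mathbf C\in\mathcal K$ with $\mathbf C\to(\mathbf B)^{\mathbf A}_k$. The age $\mathrm{Age}(\mathbf F)$ of a structure $\mathbf F$ is the class of finite structures embeddable in $\mathbf F$. A tournament is a directed graph in which every pair of distinct vertices carries exactly one directed edge; it is homogeneous if every isomorphism between finite substructures extends to an automorphism. $\mathbf T=(T,E^{\mathbf T})$ is a countable homogeneous tournament, and $\mathbf T^*$ is an expansion of $\mathbf T$ to a countable relational language $L_{\mathbf T^*}\supseteq\{E,<\}$ in which $<$ is interpreted as a linear order $<^*$ on $T$. Fix a linear order $\prec$ on $\mathbb N$ with $(\mathbb N,\prec)\cong(\mathbb Q,<)$. The structure $\mathbf T[I_\omega]^*$ has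 universe $T\times\mathbb N$ and language $L_{\mathbf T^*}$, interpreted as: $E((x,i),(y,j))$ iff $E^{\mathbf T}(x,y)$; for each $m$-ary $R\in L_{\mathbf T^*}\setminus\{E,<\}$, $R((x_1,i_1),\dots,(x_m,i_m))$ iff $R^{\mathbf T^*}(x_1,\dots,x_m)$; $(x,i)<(y,j)$ iff $x<^*y$, or $x=y$ and $i\prec j$. *)

From HB Require Import structures.
From mathcomp Require Import all_boot all_order all_algebra.
Set Implicit Arguments. Unset Strict Implicit. Unset Printing Implicit Defensive.
Import Order.TTheory GRing.Theory Num.Theory.

Record lang := Lang { sym : countType; ar : sym -> nat }.

(** A structure: a universe together with, for each symbol, a set of tuples
    (tuples are sequences; well-formedness w.r.t. arities is a separate
    predicate). *)
Record struct (L : lang) := Struct {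
  car : Type;
  srel : sym L -> seq car -> Prop }.
Arguments srel {L} s _ _ : rename.
Arguments Struct {L} car srel : rename.

Record fstruct (L : lang) := FStruct {
  fcar : finType;
  frel : sym L -> seq fcar -> Prop }.
Arguments frel {L} s _ _ : rename.
Arguments FStruct {L} fcar frel : rename.

Definition wf_struct L (M : struct L) :=
  forall s (t : seq (car M)), srel M s t -> size t = ar s.

Definition embeds L (A : fstruct L) (F : struct L) :=
  exists f : fcar A -> car F, injective f /\
    forall s (t : seq (fcar A)), frel A s t <-> srel F s (map f t).

Definition fiso L (A B : fstruct L) :=
  exists f : fcar A -> fcar B, bijective f /\
    forall s (t : seq (fcar A)), frel A s t <-> frel B s (map f t).

Definition induced L (C : fstruct L) (S : {set fcar C}) : fstruct L :=
  @FStruct L {x : fcar C | x \in S}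
    (fun s t => frel C s (map val t)).

Definition arrows L (C B A : fstruct L) (k : nat) :=
  forall c : {set fcar C} -> 'I_k,
    exists B' : {set fcar C}, fiso (induced B') B /\
      forall A1 A2 : {set fcar C}, A1 \subset B' -> A2 \subset B' ->
        fiso (induced A1) A -> fiso (induced A2) A -> c A1 = c A2.

Definition ramsey_property L (K : fstruct L -> Prop) :=
  forall k, 0 < k -> forall A B, K A -> K B ->
    exists C, K C /\ arrows C B A k.

Definition Age L (F : struct L) : fstruct L -> Prop := fun A => embeds A F.

Definition tournament (T : Type) (E : T -> T -> Prop) :=
  (forall x, ~ E x x) /\ (forall x y, x <> y -> (E x y <-> ~ E y x)).

(** Every isomorphism between finite substructures (a map f injective on the
    finite set X, preserving E both ways on X, onto its image) extends to an
    automorphism. *)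
Definition homogeneous_digraph (T : eqType) (E : T -> T -> Prop) :=
  forall (X : seq T) (f : T -> T), {in X &, injective f} ->
    (forall x y, x \in X -> y \in X -> (E x y <-> E (f x) (f y))) ->
    exists g : T -> T, bijective g /\ (forall x y, E x y <-> E (g x) (g y)) /\
      {in X, g =1 f}.

Definition strict_linear_order (T : Type) (lt : T -> T -> Prop) :=
  (forall x, ~ lt x x) /\ (forall x y z, lt x y -> lt y z -> lt x z) /\
  (forall x y, x <> y -> lt x y \/ lt y x).

Definition iso_to_rat (prec : nat -> nat -> Prop) :=
  exists g : nat -> rat, bijective g /\ forall i j, prec i j <-> (g i < g j)%R.

(** T[I_omega]^*, built from the relations R of T^* (with symbol Lt for <). *)
Definition TIomega L (Lt : sym L) (T : Type) (R : sym L -> seq T -> Prop)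
  (prec : nat -> nat -> Prop) : struct L :=
  @Struct L (T * nat)%type (fun s t =>
    if s == Lt then
      match t with
      | [:: a; b] => R Lt [:: a.1; b.1] \/ (a.1 = b.1 /\ prec a.2 b.2)
      | _ => False
      end
    else R s (map fst t)).

From Pilot Require Import Defs.
From mathcomp Require Import all_boot all_order all_algebra zify.
From Stdlib Require Import ClassicalEpsilon.
Set Implicit Arguments. Unset Strict Implicit. Unset Printing Implicit Defensive.
Import Order.TTheory GRing.Theory Num.Theory.

(** Write [F] for [T[I_omega]^*]. Given finite substructures [A], [B] of [F]
    and [k] colours, the bases of [A] and [B] (their sets of first coordinates
    with the structure induced by [T^*]) lie in the age of [T^*], so the hypothesis
    gives [C0] in the age of [T^*] with [C0 -> (base B)^(base A)_k]. The product
    Ramsey theorem gives [N] such that for every colouring of [C0]-indexed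
    families of subsets of [{0..N}] there is a family [H] of [|B|]-sets inside
    which the colour only depends on the sizes of the sets. The witness is the
    grid [C0 x {0..N}], embedded in [F] by sending [(y, n)] to [y] paired with
    the [n]-th point of a [prec]-increasing sequence. For a colouring [c] of
    the grid, a copy of [A] inside [H] has fibre sizes determined by its base,
    which is a copy of [base A] in [C0]; so [c] induces a colouring of those
    copies, and a homogeneous copy of [base B] lifts to a copy of [B] in [H]. *)

Lemma exists_subset_card (U : finType) (A : {set U}) n :
  n <= #|A| -> exists B : {set U}, B \subset A /\ #|B| = n.
Proof.
elim: n => [|n IH] le_nA; first by exists set0; rewrite sub0set cards0.
have [B [sBA cardB]] := IH (ltnW le_nA).
have : 0 < #|A :\: B| by rewrite cardsDS // subn_gt0 cardB.
rewrite card_gt0 => /set0Pn [x /setDP [xA xNB]].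
exists (x |: B); split; first by rewrite subUset sub1set xA sBA.
by rewrite cardsU1 xNB cardB add1n.
Qed.

Definition ramsey_bound (K : finType) (m t s : nat) :=
  forall (U : finType) (H : {set U}) (chi : {set U} -> K), s <= #|H| ->
  exists H' : {set U}, [/\ H' \subset H, #|H'| = t &
   forall X Y : {set U}, X \subset H' -> Y \subset H' -> #|X| = m -> #|Y| = m ->
     chi X = chi Y].

Fixpoint end_homogeneous (U : finType) (K : Type) (chi : {set U} -> K) m (a : seq U) :=
  if a is x :: a' then
    (forall Y Z : {set U}, Y \subset [set z in a'] -> Z \subset [set z in a'] ->
       #|Y| = m -> #|Z| = m -> chi (x |: Y) = chi (x |: Z)) /\ end_homogeneous chi m a'
  else True.

Lemma end_homogeneous_at (U : finType) (K : Type) (chi : {set U} -> K) m a x :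
  end_homogeneous chi m a -> x \in a -> forall Y Z : {set U},
  Y \subset [set z in drop (index x a).+1 a] -> Z \subset [set z in drop (index x a).+1 a] ->
  #|Y| = m -> #|Z| = m -> chi (x |: Y) = chi (x |: Z).
Proof.
elim: a => //= y a IH [homy homa]; case: (y =P x) => [<- _|nyx]; first by rewrite drop0.
by rewrite inE => /predU1P [xy|/IH]; [case: nyx | apply].
Qed.

(** Assuming Ramsey's theorem for [m]-subsets, large sets contain
    end-homogeneous sequences (for [m.+1]-subsets) of any length [n]: pick [x],
    then a large homogeneous set for the colouring [Y |-> chi (x |: Y)]. *)
Lemma end_homogeneous_exists (K : finType) m
    (ramsey_m : forall t, exists s, ramsey_bound K m t s) n :
  exists s, forall (U : finType) (H : {set U}) (chi : {set U} -> K), s <= #|H| ->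
    exists a : seq U, [/\ uniq a, size a = n, {subset a <= H} & end_homogeneous chi m a].
Proof.
elim: n => [|n [s IHn]]; first by exists 0 => U H chi _; exists [::].
have [s1 Hs1] := ramsey_m s.
exists s1.+1 => U H chi le_s1H.
have : 0 < #|H| by apply: leq_ltn_trans le_s1H.
rewrite card_gt0 => /set0Pn [x xH].
have le_s1Hx : s1 <= #|H :\ x| by move: le_s1H; rewrite (cardsD1 x H) xH.
have [H2 [sH2 cardH2 homH2]] := Hs1 U (H :\ x) (fun Y => chi (x |: Y)) le_s1Hx.
have [a [uniq_a size_a sub_a end_a]] := IHn U H2 chi (eq_leq (esym cardH2)).
have aH2 : [set z in a] \subset H2 by apply/subsetP => z; rewrite inE; apply: sub_a.
exists (x :: a); split => /=; rewrite ?size_a //.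
- rewrite uniq_a andbT; apply/negP => /sub_a /(subsetP sH2).
  by rewrite !inE eqxx.
- move=> z; rewrite inE => /predU1P [->//|/sub_a /(subsetP sH2)].
  by rewrite inE => /andP[_ ->].
- split=> // Y Z sY sZ; apply: homH2.
  + exact: subset_trans sY aH2.
  + exact: subset_trans sZ aH2.
Qed.

Lemma pigeonhole (U K : finType) (P : {set U}) (f : U -> K) t (k0 : K) :
  #|K| * t <= #|P| -> exists c, t <= #|[set z in P | f z == c]|.
Proof.
case: t => [|t] le; first by exists k0.
have [c hc|small] := pickP (fun c => t < #|[set z in P | f z == c]|); first by exists c.
have : #|P| <= #|K| * t.
  have -> : #|P| = \sum_(c : K) #|[set z in P | f z == c]|.
    rewrite -sum1_card (partition_big f predT) //=.
    by apply: eq_bigr => c _; rewrite -sum1_card; apply: eq_bigl => z; rewrite inE.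
  rewrite -sum_nat_const; apply: leq_sum => c _.
  by have := small c; rewrite /= ltnNge => /negbFE.
have K_gt0 : 0 < #|K| by apply/card_gt0P; exists k0.
by move/(leq_trans le); rewrite leq_pmul2l // ltnn.
Qed.

Lemma mem_drop_index (T : eqType) (a : seq T) y j :
  y \in a -> j <= index y a -> y \in drop j a.
Proof.
move=> ya le; have := ya.
by rewrite -{1}(cat_take_drop j a) mem_cat in_take // ltnNge le.
Qed.

(** Finite Ramsey theorem for [m]-subsets, by induction on [m]: in a long
    end-homogeneous sequence, the colour of an [m.+1]-set only depends on its
    first element; pigeonhole on that colour gives the homogeneous set. *)
Lemma finite_ramsey (K : finType) m t : exists s, ramsey_bound K m t s.
Proof.
elim: m t => [|m IHm] t.
  exists t => U H chi le; have [B [sB cB]] := exists_subset_card le.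
  by exists B; split=> // X Y _ _ /cards0_eq -> /cards0_eq ->.
have [s Hs] := end_homogeneous_exists IHm (#|K| * t + m).
exists s => U H chi le.
have [a [uniq_a size_a sub_a end_a]] := Hs U H chi le.
set n := #|K| * t.
pose P := [set z in take n a].
pose head_colour z := chi (z |: [set y in take m (drop (index z a).+1 a)]).
have cardP : #|P| = n.
  by rewrite cardsE (card_uniqP _) ?take_uniq // size_takel // size_a leq_addr.
have [c hc] := pigeonhole head_colour (chi set0) (eq_leq (esym cardP)).
have [H' [sH' cardH']] := exists_subset_card hc.
have H'a z : z \in H' -> z \in a.
  by move/(subsetP sH'); rewrite !inE => /andP [/mem_take].
exists H'; split => //; first by apply/subsetP => z /H'a /sub_a.
suff colour_c (X : {set U}) : X \subset H' -> #|X| = m.+1 -> chi X = c.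
  by move=> X Y sX sY cX cY; rewrite (colour_c X) // (colour_c Y).
move=> sX cX; have : 0 < #|X| by rewrite cX.
rewrite card_gt0 => /set0Pn [z0 z0X].
case: (arg_minnP (fun z => index z a) z0X) => x xX' minx.
have xX : x \in X := xX'.
move: (subsetP sH' x (subsetP sX x xX)); rewrite !inE => /andP [xt /eqP <-].
have xa : x \in a by apply: mem_take xt.
have sXx : X :\ x \subset [set z in drop (index x a).+1 a].
  apply/subsetP => y; rewrite !inE => /andP [yx yX].
  have ya : y \in a by apply/H'a/(subsetP sX).
  rewrite mem_drop_index //; have := minx y yX; rewrite leq_eqVlt => /orP [/eqP e|//].
  by move: yx; rewrite -(nth_index x ya) -e nth_index ?eqxx.
have uniq_d : uniq (take m (drop (index x a).+1 a)) by rewrite take_uniq // drop_uniq.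
rewrite -{1}(setD1K xX) /head_colour; apply: (end_homogeneous_at end_a xa) => //.
- by apply/subsetP => y; rewrite !inE; exact: mem_take.
- by move: cX; rewrite (cardsD1 x X) xX add1n => -[].
- rewrite cardsE (card_uniqP uniq_d) size_takel // size_drop size_a.
  have : index x a < n by rewrite -in_take.
  lia.
Qed.

Section ProductRamsey.
Variables (I : finType) (k : nat).

Definition update (V : finType) (S : {ffun I -> {set V}}) i (X : {set V}) :
  {ffun I -> {set V}} := [ffun j => if j == i then X else S j].

Definition subfamily (V : finType) (S H : {ffun I -> {set V}}) :=
  forall j, S j \subset H j.

Definition coord_homogeneous (V : finType) (chi : {ffun I -> {set V}} -> 'I_k) H i m :=
  forall S (X X' : {set V}), subfamily S H -> X \subset H i -> X' \subset H i ->
    #|X| = m -> #|X'| = m -> chi (update S i X) = chi (update S i X').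

Lemma subfamily_trans (V : finType) (S H H1 : {ffun I -> {set V}}) :
  subfamily S H -> subfamily H H1 -> subfamily S H1.
Proof. by move=> sSH sHH1 j; apply: subset_trans (sSH j) (sHH1 j). Qed.

Lemma coord_homogeneous_sub (V : finType) chi (H H1 : {ffun I -> {set V}}) i m :
  subfamily H H1 -> coord_homogeneous chi H1 i m -> coord_homogeneous chi H i m.
Proof.
move=> sHH1 hom S X X' sSH sX sX'; apply: hom.
- exact: subfamily_trans sSH sHH1.
- exact: subset_trans sX (sHH1 i).
- exact: subset_trans sX' (sHH1 i).
Qed.

Lemma exists_subfamily_card (V : finType) (H0 : {ffun I -> {set V}}) (n : I -> nat) :
  (forall i, n i <= #|H0 i|) ->
  exists H : {ffun I -> {set V}}, subfamily H H0 /\ forall i, #|H i| = n i.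
Proof.
move=> le_n; have [B BP] := fin_all_exists (fun i => exists_subset_card (le_n i)).
by exists [ffun i => B i]; split => i; rewrite ffunE; case: (BP i).
Qed.

(** Subfamilies of [H1] whose coordinates other than [i] have at most [M.+1]
    elements can be coded by families of subsets of ['I_M.+1]: number the
    elements of each [H1 j] and decode through this numbering. *)
Lemma subfamily_code (V : finType) (H1 : {ffun I -> {set V}}) i M :
  (forall j, j != i -> #|H1 j| <= M.+1) ->
  exists decode : {ffun I -> {set 'I_M.+1}} -> {ffun I -> {set V}},
    forall S, subfamily S H1 -> exists cd, forall X, update (decode cd) i X = update S i X.
Proof.
move=> small; pose num j (v : V) : 'I_M.+1 := inord (index v (enum (H1 j))).
have num_inj j : j != i -> {in H1 j &, injective (num j)}.
  move=> ji v w vH wH /(congr1 (@nat_of_ord _)); rewrite /num !inordK; last 2 first.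
  - by apply: leq_trans (small j ji); rewrite cardE index_mem mem_enum.
  - by apply: leq_trans (small j ji); rewrite cardE index_mem mem_enum.
  by move/(congr1 (nth v (enum (H1 j)))); rewrite !nth_index ?mem_enum.
exists (fun cd : {ffun I -> {set 'I_M.+1}} => [ffun j => [set v in H1 j | num j v \in cd j]]) => S sSH1.
exists [ffun j => num j @: S j] => X; apply/ffunP => j; rewrite !ffunE.
case: eqP => // /eqP ji; apply/setP => v; rewrite !inE.
apply/andP/idP => [[vH /imsetP [w wS /(num_inj j ji v w vH) ->]]|vS] //.
  exact: (subsetP (sSH1 j)).
by split; [exact: (subsetP (sSH1 j)) | apply: imset_f].
Qed.

(** The new coordinate [i] is
    handled by the finite Ramsey theorem, colouring [X] by the whole function
    mapping (codes of) the other coordinates to the colour. *)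
Lemma product_ramsey_coords (P : seq (I * nat)) (sig : I -> nat) : exists sig0 : I -> nat,
  forall (V : finType) (chi : {ffun I -> {set V}} -> 'I_k) (H0 : {ffun I -> {set V}}),
  (forall i, sig0 i <= #|H0 i|) -> exists H, [/\ subfamily H H0, forall i, #|H i| = sig i &
     forall p, p \in P -> coord_homogeneous chi H p.1 p.2].
Proof.
elim: P sig => [|[i m] P IH] sig.
  exists sig => V chi H0 /exists_subfamily_card [H [sHH0 cardH]].
  by exists H.
pose M := \sum_j sig j.
have [s ramsey_s] := @finite_ramsey {ffun {ffun I -> {set 'I_M.+1}} -> 'I_k} m (sig i).
have [sig0 Hsig0] := IH (fun j => if j == i then s else sig j).
exists sig0 => V chi H0 le_sig0.
have [H1 [sH1H0 cardH1 homH1]] := Hsig0 V chi H0 le_sig0.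
have small j : j != i -> #|H1 j| <= M.+1.
  by move/negPf => ji; rewrite cardH1 ji; apply: leqW; rewrite /M (bigD1 j) //= leq_addr.
have [decode codeP] := subfamily_code small.
pose chi' (X : {set V}) := [ffun cd => chi (update (decode cd) i X)].
have [H2 [sH2 cardH2 homH2]] := ramsey_s V (H1 i) chi' ltac:(by rewrite cardH1 eqxx).
pose H : {ffun I -> {set V}} := [ffun j => if j == i then H2 else H1 j].
have sHH1 : subfamily H H1.
  by move=> j; rewrite ffunE; case: eqP => [->//|_]; exact: subxx.
exists H; split.
- exact: subfamily_trans sHH1 sH1H0.
- by move=> j; rewrite ffunE; case: (j =P i) => [->//|/eqP/negPf ji]; rewrite cardH1 ji.
move=> p; rewrite inE => /predU1P [->|pP]; last exact: coord_homogeneous_sub sHH1 (homH1 p pP).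
move=> S X X' sSH sX sX' cardX cardX' /=.
have [cd decodeS] := codeP S (subfamily_trans sSH sHH1).
rewrite /H ffunE eqxx in sX sX'.
have := congr1 (fun f : {ffun _ -> _} => f cd) (homH2 X X' sX sX' cardX cardX').
by rewrite /= !ffunE !decodeS.
Qed.

(** If every coordinate of [H] is homogeneous for all sizes, the colour of a
    subfamily of [H] only depends on the sizes of its coordinates: change the
    coordinates one at a time. *)
Lemma colour_of_sizes (V : finType) chi (H : {ffun I -> {set V}}) t :
  (forall i, #|H i| = t) -> (forall i m, m <= t -> coord_homogeneous chi H i m) ->
  forall S S', subfamily S H -> subfamily S' H -> (forall j, #|S j| = #|S' j|) ->
  chi S = chi S'.
Proof.
move=> cardH homH S S' sSH sS'H cardS.
suff change_coords (l : seq I) S0 : subfamily S0 H -> (forall j, j \notin l -> S0 j = S' j) ->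
    (forall j, #|S0 j| = #|S' j|) -> chi S0 = chi S'.
  by apply: (change_coords (enum I)) => // j; rewrite mem_enum.
elim: l S0 => [|x l IHl] S0 sS0H agree cardS0.
  by congr chi; apply/ffunP => j; apply: agree.
have -> : S0 = update S0 x (S0 x) by apply/ffunP => j; rewrite ffunE; case: eqP => // ->.
rewrite (homH x #|S0 x| _ S0 (S0 x) (S' x)) //.
- apply: IHl => j; rewrite ?ffunE.
  + by case: eqP => [->|_]; [exact: sS'H | exact: sS0H].
  + by move=> jl; case: eqP => [->//|/eqP jx]; apply: agree; rewrite inE negb_or jx.
  + by case: eqP => [->//|_].
- by rewrite -(cardH x); apply: subset_leq_card.
Qed.

Lemma product_ramsey t : exists N, forall (chi : {ffun I -> {set 'I_N.+1}} -> 'I_k),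
  exists H : {ffun I -> {set 'I_N.+1}}, (forall i, #|H i| = t) /\
  forall S S', subfamily S H -> subfamily S' H -> (forall j, #|S j| = #|S' j|) ->
    chi S = chi S'.
Proof.
pose P := [seq (i, m) | i <- enum I, m <- iota 0 t.+1].
have [sig0 Hsig0] := product_ramsey_coords P (fun _ => t).
exists (\sum_i sig0 i) => chi.
have le_sig0 i : sig0 i <= #|([ffun _ => setT] : {ffun I -> {set 'I_(\sum_i sig0 i).+1}}) i|.
  by rewrite ffunE cardsT card_ord; apply: leqW; rewrite (bigD1 i) //= leq_addr.
have [H [_ cardH homH]] := Hsig0 _ chi _ le_sig0.
exists H; split => //; apply: colour_of_sizes cardH _ => i m le_mt.
apply: (homH (i, m)); apply/allpairsP; exists (i, m) => /=.
by rewrite mem_enum -[0 :: _]/(iota 0 t.+1) mem_iota ltnS le_mt.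
Qed.

End ProductRamsey.

(** Classical truth value of a proposition, to count points satisfying an
    undecidable relation. *)
Definition propb (P : Prop) : bool := if excluded_middle_informative P then true else false.

Lemma propbP (P : Prop) : reflect P (propb P).
Proof. by rewrite /propb; case: excluded_middle_informative => h; constructor. Qed.

Section Blowup.
Variables (L : lang) (E Lt : sym L) (T : countType) (R : sym L -> seq T -> Prop)
  (prec : nat -> nat -> Prop).
Hypotheses (E_neq_Lt : E != Lt) (ar_Lt : ar Lt = 2) (wf_R : wf_struct (Struct T R))
  (tournamentE : tournament (fun x y => R E [:: x; y]))
  (orderLt : strict_linear_order (fun x y => R Lt [:: x; y])).

Local Notation F := (TIomega Lt R prec).

Lemma blowup_other s t : s != Lt -> srel F s t = R s (map fst t).
Proof. by move=> s_Lt; rewrite /= (negPf s_Lt). Qed.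

Lemma blowupLt (P : Type) (u : P -> T * nat) x y : srel F Lt (map u [:: x; y]) =
  (R Lt [:: (u x).1; (u y).1] \/ ((u x).1 = (u y).1 /\ prec (u x).2 (u y).2)).
Proof. by rewrite /= eqxx. Qed.

Lemma blowupLt_size t : srel F Lt t -> size t = 2.
Proof. by rewrite /= eqxx; case: t => [|a [|b [|c t]]]. Qed.

Lemma Lt_size (t : seq T) : R Lt t -> size t = 2.
Proof. by move=> /wf_R; rewrite ar_Lt. Qed.

Lemma Lt_irrefl x : ~ R Lt [:: x; x].
Proof. by case: orderLt. Qed.

Lemma eq_iff_no_edge (a b : T) : a = b <-> (~ R E [:: a; b] /\ ~ R E [:: b; a]).
Proof.
case: tournamentE => irr tot; split; first by move=> ->; split; apply: irr.
by case: (a =P b) => // ab; have := tot a b ab; tauto.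
Qed.

Definition same_type (P : Type) (u w : P -> T * nat) :=
  forall s t, srel F s (map u t) <-> srel F s (map w t).

Section SameType.
Variables (P : Type) (u w : P -> T * nat).

Definition same_fibres := forall x y, (u x).1 = (u y).1 <-> (w x).1 = (w y).1.
Definition same_fibre_order :=
  forall x y, (u x).1 = (u y).1 -> (prec (u x).2 (u y).2 <-> prec (w x).2 (w y).2).
Definition same_base :=
  forall s t, R s (map (fun x => (u x).1) t) <-> R s (map (fun x => (w x).1) t).

Lemma same_type_fibres : same_type u w -> same_fibres.
Proof.
move=> same x y; have Exy := same E [:: x; y]; have Eyx := same E [:: y; x].
rewrite !blowup_other //= in Exy Eyx.
have := eq_iff_no_edge (u x).1 (u y).1; have := eq_iff_no_edge (w x).1 (w y).1.
by tauto.
Qed.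

Lemma same_typeP : same_type u w <-> [/\ same_fibres, same_fibre_order & same_base].
Proof.
split=> [same|[fibres order base] s t]; last first.
  case: (s =P Lt) => [->|/eqP s_Lt]; last by rewrite !blowup_other // -!map_comp.
  case: t => [|x [|y [|z t]]]; try by split => /blowupLt_size.
  rewrite !blowupLt; have := base Lt [:: x; y]; have := fibres x y.
  by have := order x y; rewrite /=; tauto.
have fibres := same_type_fibres same; split => // [x y ux_uy|s t].
  have wx_wy := (fibres x y).1 ux_uy; have := same Lt [:: x; y].
  rewrite !blowupLt ux_uy wx_wy.
  by have := @Lt_irrefl (u y).1; have := @Lt_irrefl (w y).1; tauto.
case: (s =P Lt) => [->|/eqP s_Lt]; last by have := same s t; rewrite !blowup_other // -!map_comp.
case: t => [|x [|y [|z t]]]; try by split => /Lt_size.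
have := same Lt [:: x; y]; rewrite !blowupLt.
case: ((u x).1 =P (u y).1) => [ux_uy|ux_uy].
  by rewrite /= ux_uy (fibres x y).1 // => _; split => /Lt_irrefl.
have : (w x).1 <> (w y).1 by move/(fibres x y).2.
by tauto.
Qed.

End SameType.

Lemma same_type_iso (P : Type) (u : P -> T * nat) (A : fstruct L)
  (fA : fcar A -> T * nat) (phi : P -> fcar A) :
  (forall s t, Defs.frel A s t <-> srel F s (map fA t)) ->
  (forall s t, srel F s (map u t) <-> Defs.frel A s (map phi t)) ->
  same_type u (fun x => fA (phi x)).
Proof.
move=> fAP uP s t; rewrite (map_comp fA phi).
exact: iff_trans (uP s t) (fAP _ _).
Qed.

Section BaseIso.
Variables (P1 P2 Q1 Q2 : finType) (u1 : P1 -> T * nat) (u2 : P2 -> T * nat)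
  (pi1 : P1 -> Q1) (pi2 : P2 -> Q2) (w1 : Q1 -> T) (w2 : Q2 -> T).
Hypotheses (w1_inj : injective w1) (w2_inj : injective w2)
  (w1_pi1 : forall x, w1 (pi1 x) = (u1 x).1) (w2_pi2 : forall x, w2 (pi2 x) = (u2 x).1)
  (pi1_surj : forall q, exists x, pi1 x == q) (pi2_surj : forall q, exists x, pi2 x == q).

(** [Q1] and [Q2] (injectively coded by [w1], [w2]) are the bases of [u1] and
    [u2] ([pi1], [pi2] being the projections). *)
Lemma base_iso (phi : P1 -> P2) : bijective phi -> same_type u1 (fun x => u2 (phi x)) ->
  exists psi : Q1 -> Q2, [/\ bijective psi, forall x, psi (pi1 x) = pi2 (phi x) &
    forall s t, R s (map w1 t) <-> R s (map w2 (map psi t))].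
Proof.
move=> [phi' phiK phi'K] /same_typeP [fibres _ base].
pose sec1 q := xchoose (pi1_surj q).
have sec1K q : pi1 (sec1 q) = q by apply/eqP; exact: xchooseP (pi1_surj q).
pose psi q := pi2 (phi (sec1 q)).
have psi_pi1 x : psi (pi1 x) = pi2 (phi x).
  by apply: w2_inj; rewrite !w2_pi2; apply/(fibres _ _).1; rewrite -!w1_pi1 sec1K.
have psi_inj : injective psi.
  move=> q q' psi_qq'; apply: w1_inj; rewrite -(sec1K q) -(sec1K q') !w1_pi1.
  by apply/(fibres _ _).2; rewrite -!w2_pi2; congr (w2 _).
have psi_surj q2 : exists q, psi q == q2.
  have [x2 /eqP <-] := pi2_surj q2.
  by exists (pi1 (phi' x2)); rewrite psi_pi1 phi'K.
exists psi; split => //.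
  exists (fun q2 => xchoose (psi_surj q2)) => q; last exact/eqP/(xchooseP (psi_surj q)).
  by apply: psi_inj; apply/eqP/(xchooseP (psi_surj (psi q))).
move=> s t; have -> : map w1 t = map (fun x => (u1 x).1) (map sec1 t).
  by rewrite -map_comp; apply: eq_map => q /=; rewrite -w1_pi1 sec1K.
have -> : map w2 (map psi t) = map (fun x => (u2 (phi x)).1) (map sec1 t).
  by rewrite -!map_comp; apply: eq_map => q /=; rewrite -w2_pi2.
exact: base.
Qed.

End BaseIso.

Definition base_rank (Q : finType) (w : Q -> T) (q : Q) :=
  #|[set z | propb (R Lt [:: w z; w q])]|.

Lemma base_rank_iso (Q1 Q2 : finType) (w1 : Q1 -> T) (w2 : Q2 -> T) (psi : Q1 -> Q2) :
  bijective psi -> (forall s t, R s (map w1 t) <-> R s (map w2 (map psi t))) ->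
  forall q, base_rank w2 (psi q) = base_rank w1 q.
Proof.
move=> [psi' psiK psi'K] psiP q; rewrite /base_rank -(card_imset _ (can_inj psiK)).
apply: eq_card => z; rewrite inE; apply/propbP/imsetP.
  move=> ltz; exists (psi' z); last by rewrite psi'K.
  by rewrite inE; apply/propbP/(psiP Lt [:: psi' z; q]); rewrite /= psi'K.
by move=> [z' + ->]; rewrite inE => /propbP /(psiP Lt [:: z'; q]).
Qed.

Lemma base_rank_inj (Q : finType) (w : Q -> T) : injective w -> injective (base_rank w).
Proof.
move=> w_inj; case: orderLt => irr [trans total].
suff rank_lt q q' : R Lt [:: w q; w q'] -> base_rank w q < base_rank w q'.
  move=> q q' rank_qq'; apply: w_inj; case: (w q =P w q') => // /total.
  by case=> /rank_lt; rewrite rank_qq' ltnn.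
move=> lt_qq'; apply: proper_card; apply/properP; split.
  by apply/subsetP => z; rewrite !inE => /propbP lt_zq; apply/propbP/(trans _ _ _ lt_zq).
by exists q; rewrite !inE; apply/propbP => //; apply: irr.
Qed.

Definition base_points (P : finType) (u : P -> T * nat) := undup [seq (u a).1 | a <- enum P].

Lemma base_points_mem (P : finType) (u : P -> T * nat) a : (u a).1 \in base_points u.
Proof. by rewrite mem_undup; apply: map_f; rewrite mem_enum. Qed.

Definition base_proj (P : finType) (u : P -> T * nat) a : seq_sub (base_points u) :=
  SeqSub (base_points_mem u a).

Lemma base_proj_surj (P : finType) (u : P -> T * nat) (q : seq_sub (base_points u)) :
  exists a, base_proj u a == q.
Proof.
have := ssvalP q; rewrite mem_undup => /mapP [a _ qa].
by exists a; apply/eqP/val_inj; rewrite /= qa.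
Qed.

Definition Base (P : finType) (u : P -> T * nat) : fstruct L :=
  @FStruct L (seq_sub (base_points u)) (fun s t => R s (map (@ssval _ _) t)).

Section Slots.
Variables (g : nat -> rat) (ginv : rat -> nat) (ginvK : cancel ginv g)
  (g_prec : forall i j, prec i j <-> (g i < g j)%R).

Definition slot (n : nat) : nat := ginv n%:R.

Lemma slot_prec a b : prec (slot a) (slot b) <-> a < b.
Proof. by apply: iff_trans (g_prec _ _) _; rewrite /slot !ginvK ltr_nat. Qed.

Lemma slot_inj : injective slot.
Proof. by move=> a b /(congr1 g); rewrite /slot !ginvK => /eqP; rewrite eqr_nat => /eqP. Qed.

End Slots.

Lemma enum_ord_sorted n (A : {set 'I_n}) : sorted ltn (map val (enum A)).
Proof.
rewrite sorted_map /enum_mem -enumT; apply: sorted_filter; first exact: ltn_trans.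
by rewrite -sorted_map val_enum_ord iota_ltn_sorted.
Qed.

Lemma nth_enum_ord_lt n (i0 : 'I_n) (A : {set 'I_n}) a b : a < #|A| -> b < #|A| ->
  (val (nth i0 (enum A) a) < val (nth i0 (enum A) b)) = (a < b).
Proof.
rewrite cardE => lt_a lt_b; rewrite -!(nth_map i0 (val i0)) //.
by apply: (lt_sorted_ltn_nth (val i0) (enum_ord_sorted A)); rewrite inE size_map.
Qed.

(** The construction. [A] and [B] are finite substructures of [F] and [C0] a
    finite substructure of [T^*]; the grid over [C0] has the points
    [(y, n)], [y] in [C0], [n <= N], placed in [F] at [(y, slot n)]. *)
Section Grid.
Variables (g : nat -> rat) (ginv : rat -> nat) (ginvK : cancel ginv g) (gK : cancel g ginv)
  (g_prec : forall i j, prec i j <-> (g i < g j)%R).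
Variables (A : fstruct L) (fA : fcar A -> T * nat)
  (fA_emb : forall s t, Defs.frel A s t <-> srel F s (map fA t)).
Variables (B : fstruct L) (fB : fcar B -> T * nat) (fB_inj : injective fB)
  (fB_emb : forall s t, Defs.frel B s t <-> srel F s (map fB t)).
Variables (C0 : fstruct L) (fC : fcar C0 -> T) (fC_inj : injective fC)
  (fC_emb : forall s t, Defs.frel C0 s t <-> R s (map fC t)).
Variables (N k : nat).

Local Notation I := (fcar C0).
Local Notation V := ('I_N.+1).

Definition grid_point (p : I * V) : T * nat := (fC p.1, slot ginv p.2).

Lemma grid_point_inj : injective grid_point.
Proof. by move=> [y n] [z m] [/fC_inj -> /(slot_inj ginvK) /val_inj ->]. Qed.

Definition Grid : fstruct L := @FStruct L (I * V)%type (fun s t => srel F s (map grid_point t)).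

(** Subsets of the grid are families of fibres indexed by [C0]. *)
Definition family_set (S : {ffun I -> {set V}}) : {set I * V} := [set p | p.2 \in S p.1].
Definition fibres_of (X : {set I * V}) : {ffun I -> {set V}} := [ffun y => [set n | (y, n) \in X]].

Lemma fibres_ofK X : family_set (fibres_of X) = X.
Proof. by apply/setP => -[y n]; rewrite !inE ffunE inE. Qed.

Variables (c : {set I * V} -> 'I_k) (H : {ffun I -> {set V}})
  (le_B_H : forall y, #|fcar B| <= #|H y|)
  (H_sizes : forall S S', subfamily S H -> subfamily S' H -> (forall y, #|S y| = #|S' y|) ->
      c (family_set S) = c (family_set S')).

Definition copy_over (Y : {set I}) (X : {set I * V}) :=
  [/\ fiso (induced (C := Grid) X) A, X \subset family_set H & [set p.1 | p in X] = Y].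

Lemma copy_base_iso Y X : copy_over Y X ->
  exists (phi : {p | p \in X} -> fcar A) (psi : {y | y \in Y} -> seq_sub (base_points fA)),
  [/\ bijective phi, bijective psi,
    forall p (yY : (val p).1 \in Y), psi (Sub (val p).1 yY) = base_proj fA (phi p) &
    forall s t, R s (map (fun q => fC (val q)) t) <-> R s (map (@ssval _ _) (map psi t))].
Proof.
case=> [[phi [phi_bij phiP]] _ baseX].
have same : same_type (fun p : {p | p \in X} => grid_point (val p)) (fun p => fA (phi p)).
  by apply: same_type_iso fA_emb _ => s t; rewrite (map_comp grid_point val); exact: phiP.
have inY (p : {p | p \in X}) : (val p).1 \in Y by rewrite -baseX; apply: imset_f (valP p).
pose pi1 (p : {p | p \in X}) : {y | y \in Y} := Sub (val p).1 (inY p).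
have pi1_surj (q : {y | y \in Y}) : exists p, pi1 p == q.
  have /imsetP [p pX qp] : val q \in [set p.1 | p in X] by rewrite baseX; exact: valP.
  by exists (Sub p pX); apply/eqP/val_inj; rewrite /= qp.
have fC_val_inj : injective (fun q : {y | y \in Y} => fC (val q)).
  by move=> q q' /fC_inj /val_inj.
have [psi [psi_bij psi_pi1 psiP]] := base_iso (u1 := fun p => grid_point (val p)) (u2 := fA)
  (pi1 := pi1) (pi2 := base_proj fA) (w1 := fun q => fC (val q)) (w2 := @ssval _ _) fC_val_inj val_inj (fun _ => erefl) (fun _ => erefl) pi1_surj (@base_proj_surj _ fA)
  phi_bij same.
exists phi, psi; split => // p yY.
by rewrite -psi_pi1; congr psi; apply: val_inj.
Qed.

Lemma copy_base Y X : copy_over Y X -> fiso (induced (C := C0) Y) (Base fA).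
Proof.
move=> /copy_base_iso [phi [psi [_ psi_bij _ psiP]]].
by exists psi; split => // s t; apply: iff_trans (fC_emb _ _) _; rewrite -map_comp.
Qed.

Definition rank_in (Y : {set I}) (y : I) := #|[set z in Y | propb (R Lt [:: fC z; fC y])]|.

Lemma base_rank_sub (Y : {set I}) y (yY : y \in Y) :
  base_rank (fun z : {z | z \in Y} => fC (val z)) (Sub y yY) = rank_in Y y.
Proof.
rewrite /base_rank -(card_imset _ val_inj); apply: eq_card => z; rewrite inE.
apply/imsetP/andP => [[z' + ->]|[zY ltz]]; first by rewrite inE; split; [exact: valP|].
by exists (Sub z zY); rewrite ?inE.
Qed.

(** In a copy of [A] over [Y], the fibre above [y] has as many points as the
    fibre of [A] above the point of rank [rank_in Y y] of the base of [A]: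
    fibre sizes of copies of [A] are determined by their base. *)
Lemma copy_fibre_card Y X y : copy_over Y X -> y \in Y ->
  #|[set n | (y, n) \in X]| =
  #|[set a | base_rank (@ssval _ _) (base_proj fA a) == rank_in Y y]|.
Proof.
move=> copyX yY; have [phi [psi [phi_bij psi_bij psi_proj psiP]]] := copy_base_iso copyX.
have -> : [set a | base_rank (@ssval _ _) (base_proj fA a) == rank_in Y y] =
    [set a | base_proj fA a == psi (Sub y yY)].
  apply/setP => a; rewrite !inE -(base_rank_sub yY) -(base_rank_iso psi_bij psiP).
  exact/inj_eq/base_rank_inj/val_inj.
have [phi' phiK phi'K] := phi_bij.
have inY (p : {p | p \in X}) : (val p).1 \in Y.
  by case: copyX => _ _ <-; apply: imset_f (valP p).
have -> : [set n | (y, n) \in X] = [set (val p).2 | p in [set p : {p | p \in X} | (val p).1 == y]].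
  apply/setP => n; rewrite inE; apply/idP/imsetP => [yn|[p + ->]].
    by exists (Sub (y, n) yn); rewrite ?inE.
  by rewrite inE => /eqP <-; rewrite -surjective_pairing; exact: valP.
rewrite card_in_imset; last first.
  move=> p p'; rewrite !inE => /eqP py /eqP p'y pp'; apply: val_inj.
  by rewrite [val p]surjective_pairing [val p']surjective_pairing py p'y pp'.
rewrite -(card_imset _ (can_inj phiK)); apply: eq_card => a; rewrite inE.
apply/imsetP/eqP => [[p + ->]|proj_a]; first rewrite inE => /eqP py.
  by rewrite -(psi_proj p (inY p)); congr psi; apply: val_inj.
exists (phi' a); rewrite ?phi'K // inE; apply/eqP.
have := psi_proj (phi' a) (inY _); rewrite phi'K proj_a.
by move=> /(bij_inj psi_bij) /(congr1 val).
Qed.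

Lemma copy_colour Y X X' : copy_over Y X -> copy_over Y X' -> c X = c X'.
Proof.
move=> copyX copyX'; rewrite -(fibres_ofK X) -(fibres_ofK X'); apply: H_sizes.
- by case: copyX => _ /subsetP XH _ y; apply/subsetP => n; rewrite ffunE inE => /XH; rewrite inE.
- by case: copyX' => _ /subsetP XH _ y; apply/subsetP => n; rewrite ffunE inE => /XH; rewrite inE.
move=> y; rewrite !ffunE; case: (boolP (y \in Y)) => yY.
  by rewrite (copy_fibre_card copyX yY) (copy_fibre_card copyX' yY).
have no_fibre Z : copy_over Y Z -> [set n | (y, n) \in Z] = set0.
  case=> _ _ baseZ; apply/setP => n; rewrite !inE; apply/negP => yn.
  by move: yY; rewrite -baseZ (imset_f (fun p : I * V => p.1) yn).
by rewrite (no_fibre _ copyX) (no_fibre _ copyX').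
Qed.

Definition base_colour (Y : {set I}) : 'I_k := c (epsilon (inhabits set0) (copy_over Y)).

Lemma copy_colourE Y X : copy_over Y X -> c X = base_colour Y.
Proof. by move=> copyX; apply: (copy_colour copyX); apply: epsilon_spec; exists X. Qed.

(** Lifting a copy [B0'] of the base of [B] in [C0] (given by [psiB]) to a copy
    of [B] inside [H]: a point [b] goes above the point of [B0'] corresponding
    to its base point, at the position in [H] given by its rank in its fibre. *)
Section Lift.
Variables (B0' : {set I}) (psiB : {y | y \in B0'} -> seq_sub (base_points fB))
  (psiB' : seq_sub (base_points fB) -> {y | y \in B0'}) (psiB'K : cancel psiB' psiB)
  (psiB_R : forall s t, R s (map fC (map val t)) <-> R s (map (@ssval _ _) (map psiB t))).

Definition lift_base (b : fcar B) : I := val (psiB' (base_proj fB b)).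

Definition fibre_rank (b : fcar B) :=
  #|[set b' | ((fB b').1 == (fB b).1) && (g (fB b').2 < g (fB b).2)%R]|.

Definition lift (b : fcar B) : I * V :=
  (lift_base b, nth ord0 (enum (H (lift_base b))) (fibre_rank b)).

Definition lifted_B : {set I * V} := lift @: [set: fcar B].

Lemma lift_base_eq x y : lift_base x = lift_base y <-> (fB x).1 = (fB y).1.
Proof.
split => [/val_inj /(can_inj psiB'K) /(congr1 val)//|xy].
by rewrite /lift_base; congr (val (psiB' _)); apply: val_inj.
Qed.

Lemma fibre_rank_lt b : fibre_rank b < #|H (lift_base b)|.
Proof.
apply: leq_trans (le_B_H _); rewrite /fibre_rank -cardsT; apply: proper_card.
by apply/properP; split; [exact: subsetT | exists b; rewrite ?inE // ltxx andbF].
Qed.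

Lemma fibre_rank_ltE x y : (fB x).1 = (fB y).1 ->
  (fibre_rank x < fibre_rank y) = (g (fB x).2 < g (fB y).2)%R.
Proof.
have rank_lt x' y' : (fB x').1 = (fB y').1 -> (g (fB x').2 < g (fB y').2)%R ->
    fibre_rank x' < fibre_rank y'.
  move=> xy' lt_xy'; apply: proper_card; apply/properP; split.
    apply/subsetP => z; rewrite !inE => /andP [/eqP -> lt_zx]; rewrite xy' eqxx /=.
    exact: lt_trans lt_zx lt_xy'.
  by exists x'; rewrite !inE ?xy' ?eqxx ?lt_xy' ?ltxx ?andbF.
move=> xy; case: (ltgtP (g (fB x).2) (g (fB y).2)) => [/(rank_lt _ _ xy)//|gt|eq_g].
  by apply/negbTE; rewrite -leqNgt ltnW // rank_lt.
suff -> : x = y by rewrite ltnn.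
apply: fB_inj.
by rewrite [fB x]surjective_pairing [fB y]surjective_pairing xy (can_inj gK eq_g).
Qed.

Lemma lift_inj : injective lift.
Proof.
move=> x y [base_xy pos_xy].
have xy := (lift_base_eq x y).1 base_xy.
have lt_x := fibre_rank_lt x; have lt_y := fibre_rank_lt y; rewrite base_xy in lt_x pos_xy.
have : ~~ (fibre_rank x < fibre_rank y) && ~~ (fibre_rank y < fibre_rank x).
  by rewrite -(nth_enum_ord_lt ord0 lt_x lt_y) -(nth_enum_ord_lt ord0 lt_y lt_x) pos_xy ltnn.
rewrite !fibre_rank_ltE //; case: ltgtP => // eq_g _; apply: fB_inj.
by rewrite [fB x]surjective_pairing [fB y]surjective_pairing xy (can_inj gK eq_g).
Qed.

Lemma lift_same_type : same_type fB (fun b => grid_point (lift b)).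
Proof.
apply/same_typeP; split.
- move=> x y; apply: iff_trans (iff_sym (lift_base_eq x y)) _.
  by rewrite /=; split => [->|/fC_inj].
- move=> x y xy; apply: iff_trans (g_prec _ _) _.
  apply: iff_trans _ (iff_sym (slot_prec ginvK g_prec _ _)).
  have base_xy := (lift_base_eq x y).2 xy.
  have lt_x := fibre_rank_lt x; have lt_y := fibre_rank_lt y; rewrite -base_xy in lt_y.
  by rewrite /lift /= -base_xy (nth_enum_ord_lt ord0 lt_x lt_y) fibre_rank_ltE.
- move=> s t.
  have -> : map (fun b => (fB b).1) t = map (@ssval _ _) (map (base_proj fB) t).
    exact: (map_comp (@ssval _ _) (base_proj fB) t).
  have -> : map (fun b => (grid_point (lift b)).1) t =
      map fC (map val (map psiB' (map (base_proj fB) t))) by rewrite -!map_comp.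
  by rewrite psiB_R (mapK psiB'K).
Qed.

Lemma lifted_B_iso : fiso (induced (C := Grid) lifted_B) B.
Proof.
pose lift' b : {x | x \in lifted_B} := Sub (lift b) (imset_f lift (in_setT b)).
have lift'_inj : injective lift' by move=> x y /(congr1 val) /lift_inj.
have : bijective lift'.
  apply: (inj_card_bij lift'_inj); rewrite card_sig.
  apply: (@leq_trans #|lifted_B|); first by apply/eq_leq/eq_card => x; rewrite !inE.
  by rewrite -cardsT; exact: leq_imset_card.
case=> lift'' lift'K lift''K; exists lift''; split; first exact: (Bijective lift''K lift'K).
move=> s t; rewrite -{1}(mapK lift''K t).
set l := map lift'' t.
change (srel F s (map grid_point (map val (map lift' l))) <-> Defs.frel B s l).
have -> : map val (map lift' l) = map lift l by rewrite -map_comp.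
rewrite -map_comp; exact: iff_trans (iff_sym (lift_same_type s l)) (iff_sym (fB_emb s l)).
Qed.

Lemma lifted_B_on_grid : lifted_B \subset family_set H.
Proof.
apply/subsetP => _ /imsetP [b _ ->]; rewrite inE /= -mem_enum.
by apply: mem_nth; rewrite -cardE; exact: fibre_rank_lt.
Qed.

Lemma lifted_B_base p : p \in lifted_B -> p.1 \in B0'.
Proof. by move=> /imsetP [b _ ->]; exact: valP. Qed.

End Lift.

Lemma grid_arrows : arrows C0 (Base fB) (Base fA) k ->
  exists B' : {set I * V}, fiso (induced (C := Grid) B') B /\
    forall A1 A2 : {set I * V}, A1 \subset B' -> A2 \subset B' ->
      fiso (induced (C := Grid) A1) A -> fiso (induced (C := Grid) A2) A -> c A1 = c A2.
Proof.
move=> /(_ base_colour) [B0' [[psiB [[psiB' _ psiB'K] psiBP]] base_homogeneous]].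
have psiB_R s t : R s (map fC (map val t)) <-> R s (map (@ssval _ _) (map psiB t)).
  exact: iff_trans (iff_sym (fC_emb _ _)) (psiBP s t).
exists (lifted_B psiB'); split; first exact: lifted_B_iso psiB_R.
have copy_in (X : {set I * V}) : X \subset lifted_B psiB' -> fiso (induced (C := Grid) X) A ->
    copy_over [set p.1 | p in X] X.
  move=> sX isoX; split => //; exact: subset_trans sX (lifted_B_on_grid _).
have base_in (X : {set I * V}) : X \subset lifted_B psiB' -> [set p.1 | p in X] \subset B0'.
  by move=> sX; apply/subsetP => _ /imsetP [p /(subsetP sX) /lifted_B_base + ->].
move=> A1 A2 s1 s2 iso1 iso2.
rewrite (copy_colourE (copy_in _ s1 iso1)) (copy_colourE (copy_in _ s2 iso2)).
by apply: base_homogeneous; rewrite ?base_in //; apply: copy_base; apply: copy_in.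
Qed.

End Grid.
End Blowup.

Theorem mainTheorem3 (L : lang) (E Lt : sym L) (T : countType)
  (R : sym L -> seq T -> Prop) (prec : nat -> nat -> Prop) :
  E != Lt -> ar E = 2 -> ar Lt = 2 ->
  wf_struct (Struct T R) ->
  (exists f : nat -> T, injective f) ->
  tournament (fun x y => R E [:: x; y]) ->
  homogeneous_digraph (fun x y : T => R E [:: x; y]) ->
  strict_linear_order (fun x y => R Lt [:: x; y]) ->
  iso_to_rat prec ->
  ramsey_property (Age (Struct T R)) ->
  ramsey_property (Age (TIomega Lt R prec)).
Proof.
move=> E_neq_Lt _ ar_Lt wf_R _ tournamentE _ orderLt [g [[ginv gK ginvK] g_prec]] ramsey_base.
move=> k k_gt0 A B [fA [_ fA_emb]] [fB [fB_inj fB_emb]].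
have base_in_age (P : finType) (u : P -> T * nat) : Age (Struct T R) (Base R u).
  by exists (@ssval _ _); split; [exact: val_inj | move=> s t; exact: iff_refl].
have [C0 [[fC [fC_inj fC_emb]] C0_arrows]] :=
  ramsey_base k k_gt0 _ _ (base_in_age _ fA) (base_in_age _ fB).
have [N grid_ramsey] := product_ramsey (fcar C0) k #|fcar B|.
exists (Grid Lt R prec ginv fC N); split.
  exists (grid_point ginv fC (N := N)); split; last by move=> s t; exact: iff_refl.
  exact: (grid_point_inj (T := T) ginvK fC_inj).
move=> c; have [H [cardH H_sizes]] := grid_ramsey (fun S => c (family_set S)).
have le_B_H y : #|fcar B| <= #|H y| by rewrite cardH.
exact: (grid_arrows E_neq_Lt ar_Lt wf_R tournamentE orderLt ginvK gK g_prec fA_emb fB_inj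
  fB_emb fC_inj fC_emb le_B_H H_sizes C0_arrows).
Qed.
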